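(* Let $R>0$, let $(E,d)$ be a metric space whose Borel $\sigma$-algebra makes it a standard Borel space, let $\nu$ be a Radon probability measure, and let $A\subset\mathrm{Supp}(\nu)$ be closed; assume that for every $\sigma>0$ the problem $\inf_\mu\{\mathrm{Ent}_\nu(\mu):\mu(E)=1,\ \int_E d_R(x,A)^2\,d\mu(x)\le\sigma^2\}$ is attained by a unique measure. For $a>0$ let $$d\mu_{a,R}(x)=\frac{\exp(-a\,d_R(x,A)^2)}{\int_E\exp(-a\,d_R(y,A)^2)\,d\nu(y)}\,d\nu(x).$$ Let $0<\varepsilon<R$. Then $\mu_{a,R}\big(E\setminus A^{\varepsilon}\big)\to0$ as $a\to\infty$, where $A^\varepsilon=\{x\in E: d^2(x,A)\le\varepsilon\}$.
   Context: $d(x,A)=\inf_{y\in A}d(x,y)$, $d_R=\min(d,R)$; $\mathrm{Ent}_\nu(\mu)=\int\frac{d\mu}{d\nu}\ln\frac{d\mu}{d\nu}\,d\nu$ if $\mu\ll\nu$, $+\infty$ otherwise; $\mathrm{Supp}(\nu)$ is the complement of the union of all $\nu$-null open sets. *)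

From HB Require Import structures.
From mathcomp Require Import all_boot all_order all_algebra.
From mathcomp Require Import all_classical all_reals all_analysis.
Set Implicit Arguments. Unset Strict Implicit. Unset Printing Implicit Defensive.
Import Order.TTheory GRing.Theory Num.Theory.
Import numFieldNormedType.Exports.
Local Open Scope classical_set_scope.
Local Open Scope ring_scope.

(* A metric space with a distinguished point (harmless: E carries a
   probability measure, hence is nonempty).  Needed because MathComp-Analysis
   measurable types are pointed. *)
#[short(type="pointedMetricType")]
HB.structure Definition PointedMetric (K : numDomainType) :=
  { M of Metric K M & isPointed M }.

Section defs.
Context {R : realType} {E : pointedMetricType R}.

Definition BorelT : measurableType (@open E).-sigma := g_sigma_algebraType (@open E).

(* ---- Standard Borel: there is a Polish (separable, completely
   metrizable) topology on E whose Borel sigma-algebra is that of E. ---- *)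
Definition is_metric (md : E -> E -> R) : Prop :=
  [/\ forall x y, 0 <= md x y,
      forall x y, md x y = 0 <-> x = y,
      forall x y, md x y = md y x &
      forall x y z, md x z <= md x y + md y z].

Definition mopen (md : E -> E -> R) (U : set E) : Prop :=
  forall x, U x -> exists2 r : R, 0 < r & [set y | md x y < r] `<=` U.

Definition mcomplete (md : E -> E -> R) : Prop :=
  forall u : nat -> E,
    (forall e : R, 0 < e -> exists N : nat, forall m n : nat,
        (N <= m)%N -> (N <= n)%N -> md (u m) (u n) < e) ->
    exists l : E, forall e : R, 0 < e -> exists N : nat,
        forall n : nat, (N <= n)%N -> md (u n) l < e.

Definition mseparable (md : E -> E -> R) : Prop :=
  exists D : set E, countable D /\
    forall x (e : R), 0 < e -> exists2 y, D y & md x y < e.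

Definition standard_borel : Prop :=
  exists md : E -> E -> R, [/\ is_metric md, mcomplete md, mseparable md &
    <<s mopen md >> = <<s @open E >>].

(* ---- Radon probability measure: inner regular by compact sets
   (local finiteness is automatic for a probability measure). ---- *)
Definition radon (nu : probability BorelT R) : Prop :=
  forall B : set BorelT, measurable B ->
    nu B = ereal_sup [set nu K | K in [set K : set E | compact K /\ K `<=` B]].

Definition supp (nu : probability BorelT R) : set E :=
  ~` \bigcup_(U in [set U : set E | open U /\ nu U = 0%E]) U.

(* d(x,A) = inf_{y in A} d(x,y) in \bar R (= +oo when A is empty) *)
Definition distA (A : set E) (x : E) : \bar R :=
  ereal_inf [set (mdist x y)%:E | y in A].

Definition distAR (A : set E) (Rr : R) (x : E) : R :=
  fine (mine (distA A x) Rr%:E).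

Definition Ent (nu : probability BorelT R) (mu : probability BorelT R) : \bar R :=
  if `[< mu `<< nu >] then
    let f := fun x => fine (Radon_Nikodym (charge_of_finite_measure mu) nu x) in
    (\int[nu]_x (f x * ln (f x))%:E)%E
  else +oo%E.

Definition feasible (A : set E) (Rr sigma : R) (mu : probability BorelT R) : Prop :=
  (\int[mu]_x ((distAR A Rr x) ^+ 2)%:E <= (sigma ^+ 2)%:E)%E.

Definition is_minimizer (nu : probability BorelT R) (A : set E) (Rr sigma : R)
    (mu : probability BorelT R) : Prop :=
  feasible A Rr sigma mu /\
  forall mu' : probability BorelT R, feasible A Rr sigma mu' ->
    (Ent nu mu <= Ent nu mu')%E.

Definition unique_minimizer (nu : probability BorelT R) (A : set E) (Rr sigma : R) : Prop :=
  exists mu : probability BorelT R, is_minimizer nu A Rr sigma mu /\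
    forall mu' : probability BorelT R, is_minimizer nu A Rr sigma mu' ->
      forall S : set BorelT, measurable S -> mu' S = mu S.

Definition mu_aR (nu : probability BorelT R) (A : set E) (Rr a : R) (S : set BorelT) : R :=
  Rintegral nu S (fun x => expR (- a * (distAR A Rr x) ^+ 2)) /
  Rintegral nu setT (fun y => expR (- a * (distAR A Rr y) ^+ 2)).

Definition Aeps (A : set E) (eps : R) : set E :=
  [set x | (distA A x * distA A x <= eps%:E)%E].

End defs.

From HB Require Import structures.
From mathcomp Require Import all_boot all_order all_algebra.
From mathcomp Require Import all_classical all_reals all_analysis.
From mathcomp Require Import ring lra.
Import Order.TTheory GRing.Theory Num.Theory.
Import numFieldNormedType.Exports.
Local Open Scope classical_set_scope.
Local Open Scope ring_scope.

(* Near a point of A, a small open set U has positive nu-mass (A lies in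
   Supp(nu)) and d_R(., A)^2 <= del on U, while d_R(., A)^2 >= c :=
   min(eps, R^2) > del off A^eps.  Bounding the numerator of mu_{a,R} by
   exp(-a c) and its normalising constant from below by exp(-a del) nu(U) gives
     mu_{a,R}(E \ A^eps) <= exp(-a (c - del)) / nu(U) --> 0.
   A is nonempty because for A empty d_R(., A) = R and no measure meets the
   constraint with sigma = R/2; this is the only use of the minimiser
   hypothesis. *)

(* No measurability is needed: the integral of a nonnegative function is the
   supremum of the integrals of the simple functions below it. *)
Lemma le_ge0_integralT d (T : measurableType d) (R : realType)
    (mu : {measure set T -> \bar R}) (f g : T -> \bar R) :
  (forall x, 0 <= f x)%E -> (forall x, f x <= g x)%E ->
  (\int[mu]_x f x <= \int[mu]_x g x)%E.
Proof.
move=> f0 fg; have g0 x : (0 <= g x)%E by exact: le_trans (f0 x) (fg x).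
rewrite !ge0_integralTE//; apply: ereal_sup_le => _ [h hf <-].
by exists h => //= x; exact: le_trans (hf x) (fg x).
Qed.

Lemma cvgr_expR_scale (R : realType) (k : R) : 0 < k ->
  expR (- (a * k)) @[a --> +oo] --> 0.
Proof.
move=> k0; apply: (cvg_comp (fun a => a * k) (fun x => expR (- x))); last first.
  exact: cvgr_expR.
apply/cvgryPge => M; near=> a.
have : M / k <= a by near: a; apply: nbhs_pinfty_ge; rewrite num_real.
by rewrite ler_pdivrMr.
Unshelve. all: by end_near.
Qed.

Section gibbs_concentration.
Context d (T : measurableType d) (R : realType) (P : probability T R).
Variable g : T -> R.

Lemma probability_integral_le_cst (D : set T) (f : T -> \bar R) (b : R) :
  0 <= b -> (forall x, 0 <= f x)%E -> (forall x, D x -> f x <= b%:E)%E ->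
  (\int[P]_(x in D) f x <= b%:E)%E.
Proof.
move=> b0 f0 fb; rewrite integral_mkcond.
apply: le_trans (@le_ge0_integralT _ _ _ P _ (cst b%:E) _ _) _.
- by move=> x; rewrite /patch; case: ifP.
- by move=> x; rewrite /patch; case: ifP => [/set_mem/fb|]; rewrite ?lee_fin.
by rewrite integral_cst// /= probability_setT mule1.
Qed.

Lemma probability_integral_ge_indic (U : set T) (f : T -> \bar R) (b : R) :
  measurable U -> 0 <= b -> (forall x, 0 <= f x)%E ->
  (forall x, U x -> b%:E <= f x)%E -> (b%:E * P U <= \int[P]_x f x)%E.
Proof.
move=> mU b0 f0 bf.
rewrite -(setIT U) -integral_indic//.
rewrite -(@integralZl_indic _ _ _ P _ measurableT (fun=> U)) ?ltNge ?b0//.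
apply: le_ge0_integralT => x; rewrite indicE.
  by rewrite lee_fin mulr_ge0.
by case: (boolP (x \in U)) => [/set_mem/bf|]; rewrite ?mulr1 ?mulr0.
Qed.

Section expR_weight.
Variables (S : set T) (a c : R).
Hypotheses (a_ge0 : 0 <= a) (c_le_g : forall x, S x -> c <= g x).

Lemma integral_expR_le :
  (\int[P]_(x in S) (expR (- a * g x))%:E <= (expR (- a * c))%:E)%E.
Proof.
apply: probability_integral_le_cst => [|x|x /c_le_g]; rewrite ?lee_fin ?expR_ge0//.
by rewrite ler_expR !mulNr lerN2; exact: ler_wpM2l.
Qed.

Lemma integral_expR_fin_num :
  (\int[P]_(x in S) (expR (- a * g x))%:E)%E \is a fin_num.
Proof.
rewrite ge0_fin_numE; last by apply: integral_ge0 => x _; rewrite lee_fin expR_ge0.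
exact: le_lt_trans integral_expR_le (ltry _).
Qed.

Lemma Rintegral_expR_le :
  0 <= Rintegral P S (fun x => expR (- a * g x)) <= expR (- a * c).
Proof.
rewrite /Rintegral -!lee_fin fineK ?integral_expR_fin_num// integral_expR_le andbT.
by apply: integral_ge0 => x _; rewrite lee_fin expR_ge0.
Qed.

End expR_weight.

Hypothesis g_ge0 : forall x, 0 <= g x.

Lemma Rintegral_expR_ge (U : set T) (a del : R) : 0 <= a -> measurable U ->
  (forall x, U x -> g x <= del) ->
  expR (- a * del) * fine (P U) <= Rintegral P setT (fun x => expR (- a * g x)).
Proof.
move=> a0 mU g_le_del.
rewrite /Rintegral -lee_fin EFinM fineK ?fin_num_measure//.
rewrite fineK; last exact: (@integral_expR_fin_num setT a 0).
apply: probability_integral_ge_indic => [//|||x /g_le_del];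
  rewrite ?lee_fin ?expR_ge0//.
by rewrite ler_expR !mulNr lerN2; exact: ler_wpM2l.
Qed.

Section mass_ratio.
Variables (S U : set T) (c del : R).
Hypotheses (mU : measurable U) (PU_gt0 : (0 < P U)%E).
Hypotheses (g_le_del : forall x, U x -> g x <= del).
Hypotheses (c_le_g : forall x, S x -> c <= g x).

Lemma Rintegral_expR_ratio_le (a : R) : 0 <= a ->
  Rintegral P S (fun x => expR (- a * g x)) /
    Rintegral P setT (fun x => expR (- a * g x)) <=
  expR (- (a * (c - del))) / fine (P U).
Proof.
move=> a0; have p_gt0 : 0 < fine (P U).
  by rewrite fine_gt0// PU_gt0 (le_lt_trans (probability_le1 P mU)) ?ltry.
have /andP[_ num_le] := @Rintegral_expR_le S a c a0 c_le_g.
have den_ge := @Rintegral_expR_ge U a del a0 mU g_le_del.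
have den_gt0 := lt_le_trans (mulr_gt0 (expR_gt0 _) p_gt0) den_ge.
rewrite ler_pdivrMr// (le_trans num_le)//.
rewrite (_ : expR (- a * c) =
  expR (- (a * (c - del))) / fine (P U) * (expR (- a * del) * fine (P U))).
  by rewrite ler_wpM2l// divr_ge0 ?expR_ge0 ?ltW.
rewrite (_ : - a * c = - (a * (c - del)) + - a * del); last by ring.
by rewrite expRD; field; rewrite gt_eqF.
Qed.

Lemma Rintegral_expR_ratio_cvg0 : del < c ->
  Rintegral P S (fun x => expR (- a * g x)) /
    Rintegral P setT (fun x => expR (- a * g x)) @[a --> +oo] --> 0.
Proof.
move=> del_lt_c.
apply: (@squeeze_cvgr _ _ _ _ (cst 0)
  (fun a => expR (- (a * (c - del))) / fine (P U))).
- near=> a; have a0 : 0 <= a by near: a; apply: nbhs_pinfty_ge; rewrite num_real.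
  rewrite Rintegral_expR_ratio_le// andbT.
  have /andP[num_ge0 _] := @Rintegral_expR_le S a c a0 c_le_g.
  have /andP[den_ge0 _] := @Rintegral_expR_le setT a 0 a0 (fun x _ => g_ge0 x).
  exact: divr_ge0.
- exact: cvg_cst.
- rewrite -(mul0r (fine (P U))^-1); apply: cvgM; last exact: cvg_cst.
  by apply: cvgr_expR_scale; rewrite subr_gt0.
Unshelve. all: by end_near.
Qed.

End mass_ratio.

End gibbs_concentration.

Section distance_to_set.
Context {R : realType} {E : pointedMetricType R}.
Implicit Types (A : set E) (x y : E) (Rr : R).

Lemma distA_ge0 A x : (0 <= distA A x)%E.
Proof. by apply/ereal_infP => _ [y _ <-]; rewrite lee_fin mdist_ge0. Qed.

Lemma distA_le_mdist A x y : A y -> (distA A x <= (mdist x y)%:E)%E.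
Proof. by move=> Ay; apply: ereal_inf_lbound; exists y. Qed.

Lemma distAR_fin [A x r] Rr : distA A x = r%:E -> distAR A Rr x = Num.min r Rr.
Proof. by rewrite /distAR => ->; rewrite -EFin_min. Qed.

Lemma distAR_pinfty [A x] Rr : distA A x = +oo%E -> distAR A Rr x = Rr.
Proof. by rewrite /distAR => ->; rewrite minye. Qed.

Lemma distAR_set0 Rr x : distAR set0 Rr x = Rr.
Proof.
apply: distAR_pinfty; rewrite /distA image_set0; exact: ereal_inf0.
Qed.

Lemma distAR_le_mdist [A Rr] x [y] :
  0 <= Rr -> A y -> 0 <= distAR A Rr x <= mdist x y.
Proof.
move=> Rr0 /(distA_le_mdist _ x); have := distA_ge0 A x.
case dE: (distA A x) => [r| |]//= r0 r_le.
by rewrite (distAR_fin Rr dE) le_min Rr0 ge_min -!lee_fin r0 r_le.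
Qed.

Lemma distAR_sqr_ge A Rr eps x : ~ Aeps A eps x ->
  Num.min eps (Rr ^+ 2) <= distAR A Rr x ^+ 2.
Proof.
rewrite /Aeps /=; have := distA_ge0 A x.
case dE: (distA A x) => [r| |]//= r0; last first.
  by rewrite (distAR_pinfty Rr dE) ge_min lexx orbT.
rewrite (distAR_fin Rr dE) -EFinM lee_fin => /negP; rewrite -ltNge => eps_lt.
have [_|_] := leP r Rr; first by rewrite ge_min expr2 ltW.
by rewrite ge_min lexx orbT.
Qed.

Lemma feasible_set0 Rr sigma (mu : probability BorelT R) :
  feasible (set0 : set E) Rr sigma mu -> Rr ^+ 2 <= sigma ^+ 2.
Proof.
rewrite /feasible; under eq_integral => x _ do rewrite distAR_set0.
by rewrite integral_cst//= probability_setT mule1 lee_fin.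
Qed.

Lemma supp_open_gt0 (nu : probability BorelT R) x (U : set E) :
  supp nu x -> open U -> U x -> (0 < nu U)%E.
Proof.
move=> nu_x oU Ux; rewrite lt0e measure_ge0 andbT; apply/eqP => nuU0.
by apply: nu_x; exists U.
Qed.

End distance_to_set.

Theorem lemmaB1 (R : realType) (E : pointedMetricType R)
  (nu : probability (@BorelT R E) R) (A : set E) (Rr eps : R) :
  0 < Rr ->
  @standard_borel R E ->
  radon nu ->
  closed A ->
  A `<=` supp nu ->
  (forall sigma : R, 0 < sigma -> unique_minimizer nu A Rr sigma) ->
  0 < eps -> eps < Rr ->
  mu_aR nu A Rr a (~` Aeps A eps) @[a --> +oo] --> 0.
Proof.
move=> Rr_gt0 _ _ _ A_supp minimizer eps_gt0 _.
have [x0 Ax0] : A !=set0.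
  apply/set0P/eqP => A0.
  have [|mu [[feas _] _]] := minimizer (Rr / 2); first by rewrite divr_gt0.
  by move: feas; rewrite A0 => /feasible_set0; nra.
pose c := Num.min eps (Rr ^+ 2).
pose r := Num.min 1 (c / 2).
have c_gt0 : 0 < c by rewrite lt_min eps_gt0 exprn_gt0.
have r_gt0 : 0 < r by rewrite lt_min ltr01 divr_gt0.
have r2_lt_c : r ^+ 2 < c.
  have r_le1 : r <= 1 by rewrite ge_min lexx.
  have r_le_c2 : r <= c / 2 by rewrite ge_min lexx orbT.
  nra.
apply: (@Rintegral_expR_ratio_cvg0 _ _ _ nu (fun x => distAR A Rr x ^+ 2) _ _
  (ball x0 r)° c (r ^+ 2)) => //.
- by move=> x; exact: sqr_ge0.
- by apply: sub_sigma_algebra; exact: open_interior.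
- apply: supp_open_gt0 (A_supp _ Ax0) _ _; first exact: open_interior.
  exact: nbhsx_ballx.
- move=> x /interior_subset; rewrite ballEmdist /= metric_sym => x_near.
  have /andP[d_ge0 d_le] := distAR_le_mdist x (ltW Rr_gt0) Ax0.
  nra.
- by move=> x; exact: distAR_sqr_ge.
Qed.
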